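(* Assume $t\ge 2$, fix $(i,j)\in[d']\times[t]$ and $n\in[t]\setminus\{j\}$. The $\binom{d+2}{3}$ linear polynomials \[ L_{\mathcal K}=|\operatorname{Perm}(\mathcal K)|\,y^{[i]}_j(\mathcal K)-\sum_{\substack{\mathcal A\cup\{b\}=\mathcal K\\ |\mathcal A|=2}}|\operatorname{Perm}(\mathcal A)|\,y^{[i]}_{n,j}(\mathcal A,b),\qquad \mathcal K\in\operatorname{Mult}_3([d]), \] all belong to the vanishing ideal $J$ of the attention variety and are linearly independent.
   Context: Setup: $Q,K\in\mathbb R^{a\times d}$, $V=(v_{ik})\in\mathbb R^{d'\times d}$, $W=(Q,K,V)$, $A=K^\top Q$, $\varphi_W(X)=VX(X^\top AX)$ for $X=(x_{kn})\in\mathbb R^{d\times t}$. $\operatorname{Mult}_r([d])$ is the set of size-$r$ multisets on $[d]$; $\operatorname{Perm}(\mathcal M)$ the set of distinct orderings of a multiset. $c^{[i]}_j(\mathcal K)$ and $c^{[i]}_{n,j}(\mathcal A,b)$ are the coefficients of $\prod_{u\in\mathcal K}x_{uj}$ and $(\prod_{u\in\mathcal A}x_{un})x_{bj}$ in $\varphi_W(X)[i,j]$; the scaled coefficients are $y^{[i]}_j(\mathcal K)=c^{[i]}_j(\mathcal K)/|\operatorname{Perm}(\mathcal K)|$, $y^{[i]}_{n,j}(\mathcal A,b)=c^{[i]}_{n,j}(\mathcal A,b)/|\operatorname{Perm}(\mathcal A)|$. The map $\mu$ sends $W$ to the array of scaled coefficients, viewed as values of ambient coordinates with the same names; the attention variety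 is the Zariski closure of $\operatorname{im}\mu$ and $J$ its vanishing ideal. The sum in $L_{\mathcal K}$ runs over distinct decompositions of $\mathcal K$ into a size-2 multiset $\mathcal A$ and a singleton $\{b\}$. *)

From mathcomp Require Import all_boot all_algebra.
From mathcomp Require Import reals.
From mathcomp Require Import mpoly.

Set Implicit Arguments.
Unset Strict Implicit.
Unset Printing Implicit Defensive.

Import GRing.Theory.
Local Open Scope ring_scope.

(* Size-r multisets on [d] = 'I_d, given by their multiplicity functions. *)
Definition mult (r d : nat) :=
  {m : {ffun 'I_d -> 'I_r.+1} | (\sum_(u < d) (m u : nat))%N == r}.

Definition mcount (r d : nat) (K : mult r d) (u : 'I_d) : nat := val K u.

Definition nperm (r d : nat) (K : mult r d) : nat :=
  #|[set s : r.-tuple 'I_d | [forall u, count_mem u s == mcount K u]]|.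

(* Polynomial ring in the entries x_{kn} of X (k in [d], n in [t]). *)
Definition NX (d t : nat) : nat := #|{: 'I_d * 'I_t}|.
Definition xpoly (R : realType) (d t : nat) := {mpoly R[NX d t]}.

Definition Xmat (R : realType) (d t : nat) : 'M[xpoly R d t]_(d, t) :=
  \matrix_(k < d, m < t) 'X_(enum_rank (k, m)).

Definition phi (R : realType) (a d d' t : nat)
    (Q Kk : 'M[R]_(a, d)) (V : 'M[R]_(d', d)) : 'M[xpoly R d t]_(d', t) :=
  let X := Xmat R d t in
  let A := Kk^T *m Q in
  (map_mx (fun c => c%:MP) V) *m X *m (X^T *m map_mx (fun c => c%:MP) A *m X).

Definition mon (d t : nat) (e : 'I_d * 'I_t -> nat) : 'X_{1..NX d t} :=
  [multinom e (enum_val k) | k < NX d t].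

Definition monK (r d t : nat) (K : mult r d) (j : 'I_t) :=
  mon (fun p : 'I_d * 'I_t => if p.2 == j then mcount K p.1 else 0%N).

Definition monA (r d t : nat) (A : mult r d) (b : 'I_d) (n j : 'I_t) :=
  mon (fun p : 'I_d * 'I_t =>
    ((if p.2 == n then mcount A p.1 else 0%N) +
     (if (p.2 == j) && (p.1 == b) then 1 else 0))%N).

Definition cK (R : realType) (a d d' t : nat) (Q Kk : 'M[R]_(a, d))
    (V : 'M[R]_(d', d)) (i : 'I_d') (j : 'I_t) (K : mult 3 d) : R :=
  (phi t Q Kk V i j)@_(monK K j).

Definition cA (R : realType) (a d d' t : nat) (Q Kk : 'M[R]_(a, d))
    (V : 'M[R]_(d', d)) (i : 'I_d') (n j : 'I_t) (A : mult 2 d) (b : 'I_d) : R :=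
  (phi t Q Kk V i j)@_(monA A b n j).

(* ambient coordinates: y^{[i]}_j(K) and y^{[i]}_{n,j}(A,b) with n <> j;
   a tuple (i, n, j, A, b) *)
Definition coordA (d d' t : nat) :=
  {x : 'I_d' * 'I_t * 'I_t * mult 2 d * 'I_d | x.1.1.1.2 != x.1.1.2}.
Definition coord (d d' t : nat) :=
  (('I_d' * 'I_t * mult 3 d) + coordA d d' t)%type.

Definition mu (R : realType) (a d d' t : nat) (Q Kk : 'M[R]_(a, d))
    (V : 'M[R]_(d', d)) (c : coord d d' t) : R :=
  match c with
  | inl (i, j, K) => cK Q Kk V i j K / (nperm K)%:R
  | inr x => let: (i, n, j, A, b) := val x in
             cA Q Kk V i n j A b / (nperm A)%:R
  end.

Definition NY (d d' t : nat) : nat := #|{: coord d d' t}|.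
Definition ypoly (R : realType) (d d' t : nat) := {mpoly R[NY d d' t]}.
Definition yvar (R : realType) (d d' t : nat) (c : coord d d' t) : ypoly R d d' t :=
  'X_(enum_rank c).
Definition yeval (R : realType) (d d' t : nat) (p : ypoly R d d' t)
    (y : coord d d' t -> R) : R := p.@[fun k => y (enum_val k)].

Definition in_image (R : realType) (a d d' t : nat) (y : coord d d' t -> R) : Prop :=
  exists (Q Kk : 'M[R]_(a, d)) (V : 'M[R]_(d', d)), y = mu Q Kk V.

Definition attention_variety (R : realType) (a d d' t : nat)
    (y : coord d d' t -> R) : Prop :=
  forall p : ypoly R d d' t,
    (forall z, in_image a z -> yeval p z = 0) -> yeval p y = 0.

Definition inJ (R : realType) (a d d' t : nat) (p : ypoly R d d' t) : Prop :=
  forall y, attention_variety a y -> yeval p y = 0.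

Definition LK (R : realType) (d d' t : nat) (i : 'I_d') (n j : 'I_t)
    (hnj : n != j) (K : mult 3 d) : ypoly R d d' t :=
  (nperm K)%:R *: yvar R (inl (i, j, K))
  - \sum_(Ab : mult 2 d * 'I_d |
           [forall u, (mcount Ab.1 u + (u == Ab.2) == mcount K u)%N])
      (nperm Ab.1)%:R *:
        yvar R (inr (exist (fun x : 'I_d' * 'I_t * 'I_t * mult 2 d * 'I_d =>
                               x.1.1.1.2 != x.1.1.2)
                            (i, n, j, Ab.1, Ab.2) hnj)).

From Pilot Require Import Defs.
From mathcomp Require Import all_boot all_algebra.
From mathcomp Require Import reals.
From mathcomp Require Import mpoly.
From mathcomp Require Import ring.
Import GRing.Theory Num.Theory.
Local Open Scope ring_scope.

(* Expanding V X (X^T A X) entrywise, phi_W(X)[i,j] is the sum of the terms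
   V_ik A_pq x_km x_pm x_qj.  The monomial prod_{u in K} x_uj collects the terms
   with m = j and {k, p, q} = K, while (prod_{u in A} x_un) x_bj, for n <> j,
   collects those with m = n, q = b and {k, p} = A.  Since a triple (k, p, q)
   with {k, p, q} = K determines exactly one decomposition K = A + {b}, namely
   A = {k, p}, b = q, we get c_j(K) = sum_{A + {b} = K} c_{n,j}(A, b).  On the
   image of mu the rescaled coordinates |Perm| y are exactly these coefficients,
   so L_K vanishes on im mu and hence on its Zariski closure.  Independence:
   the coordinate y_j(K) occurs in L_K and in no other L_K', with coefficient
   |Perm(K)| <> 0. *)

Lemma count_mem_tuple_lt {r d} (s : r.-tuple 'I_d) u : (count_mem u s < r.+1)%N.
Proof. by rewrite ltnS -{2}(size_tuple s) count_size. Qed.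

Lemma sum_count_mem {d} (s : seq 'I_d) : (\sum_(u < d) count_mem u s)%N = size s.
Proof.
elim: s => [|x s IH] /=; first by rewrite big1.
rewrite big_split /= IH (bigD1 x) //= eqxx big1 ?addn0 // => u.
by rewrite eq_sym => /negbTE ->.
Qed.

Definition mult_of_tuple {r d} (s : r.-tuple 'I_d) : mult r d.
Proof.
exists [ffun u : 'I_d => Ordinal (count_mem_tuple_lt s u)].
apply/eqP; rewrite -[X in _ = X](size_tuple s) -sum_count_mem.
by apply: eq_bigr => u _; rewrite ffunE.
Defined.

Lemma mcount_mult_of_tuple {r d} (s : r.-tuple 'I_d) u :
  mcount (mult_of_tuple s) u = count_mem u s.
Proof. by rewrite /mcount /= ffunE. Qed.

Lemma mult_ext {r d} (K1 K2 : mult r d) :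
  (forall u, mcount K1 u = mcount K2 u) -> K1 = K2.
Proof. by move=> eqK; apply/val_inj/ffunP => u; apply/val_inj/eqK. Qed.

Lemma mult_of_tuple_surj {r d} (K : mult r d) :
  exists s : r.-tuple 'I_d, mult_of_tuple s = K.
Proof.
pose s := flatten [seq nseq (mcount K u) u | u <- enum 'I_d].
have size_s : size s == r.
  rewrite size_flatten /shape -map_comp sumnE big_map.
  apply/eqP; rewrite -[RHS](eqP (valP K)) enumT.
  by apply: eq_bigr => u _; rewrite /= size_nseq.
exists (Tuple size_s); apply: mult_ext => u.
rewrite mcount_mult_of_tuple /= count_flatten -map_comp sumnE big_map enumT.
rewrite (bigD1 u) //= count_nseq /= eqxx mul1n big1 ?addn0 // => v /negbTE.
by rewrite count_nseq /= eq_sym => ->.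
Qed.

Lemma mult_of_tuple_eqE {r d} (s : r.-tuple 'I_d) (K : mult r d) :
  (mult_of_tuple s == K) = [forall u, count_mem u s == mcount K u].
Proof.
apply/eqP/forallP => [<- u | eq_count]; first by rewrite mcount_mult_of_tuple.
by apply: mult_ext => u; rewrite mcount_mult_of_tuple; apply/eqP.
Qed.

Lemma nperm_gt0 {r d} (K : mult r d) : (0 < nperm K)%N.
Proof.
have [s <-] := mult_of_tuple_surj K; apply/card_gt0P; exists s.
by rewrite inE; apply/forallP => u; rewrite mcount_mult_of_tuple.
Qed.

Lemma natr_nperm_neq0 (R : numDomainType) {r d} (K : mult r d) :
  (nperm K)%:R != 0 :> R.
Proof. by rewrite pnatr_eq0 -lt0n nperm_gt0. Qed.

(* A multiset is determined by its sorted enumeration, so multisets are counted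
   by sorted tuples. *)
Lemma card_mult r d : #|{: mult r d.+1}| = 'C(r + d, r).
Proof.
pose S := [set s : r.-tuple 'I_d.+1 | sorted leq (map val s)].
rewrite -card_sorted_tuples -/S -(@card_in_imset _ _ mult_of_tuple S).
  apply: eq_card => K; rewrite !inE; symmetry; apply/imsetP.
  have [s <-] := mult_of_tuple_surj K.
  have size_sort_s : size (sort (relpre val leq) s) == r.
    by rewrite size_sort size_tuple.
  exists (Tuple size_sort_s).
    by rewrite inE /= sorted_map; apply: sort_sorted => x y; apply: leq_total.
  apply: mult_ext => u; rewrite !mcount_mult_of_tuple /=.
  by apply/esym/permP; rewrite perm_sort.
move=> s1 s2; rewrite !inE => sorted_s1 sorted_s2 eq_s12.
apply/val_inj/(inj_map val_inj)/(sorted_eq leq_trans anti_leq) => //.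
apply/perm_map/allP => u _; apply/eqP.
by rewrite -!mcount_mult_of_tuple eq_s12.
Qed.

Lemma card_mult3 d : #|{: mult 3 d}| = 'C(d + 2, 3).
Proof.
case: d => [|d]; last by rewrite card_mult addn2 add3n.
by apply: eq_card0 => K; have := valP K; rewrite big_ord0.
Qed.

Lemma mcoeff_yvar (R : realType) (d d' t : nat) (c c' : Defs.coord d d' t) :
  (yvar R c)@_(U_(enum_rank c')) = (c == c')%:R.
Proof. by rewrite mcoeffXU (inj_eq enum_rank_inj). Qed.

Lemma mcoeff_LK (R : realType) (d d' t : nat) (i : 'I_d') (n j : 'I_t)
    (hnj : n != j) (K K0 : mult 3 d) :
  (LK R i hnj K)@_(U_(@enum_rank (Defs.coord d d' t) (inl (i, j, K0))))
    = (nperm K)%:R * (K == K0)%:R.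
Proof.
rewrite mcoeffB mcoeffZ mcoeff_yvar raddf_sum big1 ?subr0.
  by congr (_ * (nat_of_bool _)%:R); apply/eqP/eqP => [[]|->].
by move=> Ab _ /=; rewrite mcoeffZ mcoeff_yvar mulr0.
Qed.

Lemma LK_free (R : realType) (d d' t : nat) (i : 'I_d') (n j : 'I_t)
    (hnj : n != j) (lam : mult 3 d -> R) :
  \sum_(K : mult 3 d) lam K *: LK R i hnj K = 0 -> forall K, lam K = 0.
Proof.
move=> sum_eq0 K0.
pose yK0 := U_(@enum_rank (Defs.coord d d' t) (inl (i, j, K0)))%MM.
move/(congr1 (mcoeff yK0)): sum_eq0.
rewrite mcoeff0 raddf_sum (bigD1 K0) //= big1 => [|K neqK]; last first.
  by rewrite mcoeffZ mcoeff_LK (negbTE neqK) !mulr0.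
rewrite addr0 mcoeffZ mcoeff_LK eqxx mulr1 => /eqP.
by rewrite mulf_eq0 (negbTE (natr_nperm_neq0 _ K0)) orbF => /eqP.
Qed.

Lemma mulmx_quadratic_entry (S : comNzRingType) (d d' t : nat)
    (M : 'M[S]_(d', d)) (X : 'M[S]_(d, t)) (A : 'M[S]_d) i j :
  (M *m X *m (X^T *m A *m X)) i j =
  \sum_(m < t) \sum_(k < d) \sum_(q < d) \sum_(p < d)
     M i k * X k m * X p m * A p q * X q j.
Proof.
rewrite mxE; apply: eq_bigr => m _.
rewrite mxE big_distrl; apply: eq_bigr => k _ /=.
rewrite mxE big_distrr; apply: eq_bigr => q _ /=.
rewrite mxE big_distrl big_distrr; apply: eq_bigr => p _ /=.
by rewrite !mxE; ring.
Qed.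

Lemma mcoeff_phi (R : realType) (a d d' t : nat) (Q Kk : 'M[R]_(a, d))
    (V : 'M[R]_(d', d)) (i : 'I_d') (j : 'I_t) (M : 'X_{1.. NX d t}) :
  (phi t Q Kk V i j)@_M =
  \sum_(m < t) \sum_(k < d) \sum_(q < d) \sum_(p < d)
     V i k * (Kk^T *m Q) p q *
     ((U_(enum_rank (k, m)) + U_(enum_rank (p, m)) + U_(enum_rank (q, j)))%MM
        == M)%:R.
Proof.
rewrite /phi mulmx_quadratic_entry raddf_sum; apply: eq_bigr => m _.
rewrite raddf_sum; apply: eq_bigr => k _.
rewrite raddf_sum; apply: eq_bigr => q _.
rewrite raddf_sum; apply: eq_bigr => p _.
rewrite -mcoeffX -mcoeffCM !mpolyXD mpolyCM !mxE.
by congr (mcoeff M _); ring.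
Qed.

Lemma monomial3_eq_mon (d t : nat) (x1 x2 x3 : 'I_d * 'I_t)
    (f : 'I_d * 'I_t -> nat) :
  ((U_(enum_rank x1) + U_(enum_rank x2) + U_(enum_rank x3))%MM == mon f) =
  [forall x, ((x1 == x) + (x2 == x) + (x3 == x) == f x)%N].
Proof.
have rank_eq y k : (enum_rank y == k) = (y == enum_val k).
  by rewrite -{1}(enum_valK k) (inj_eq enum_rank_inj).
apply/eqP/forallP => [/mnmP eq_mon x | eq_f].
  have := eq_mon (enum_rank x); rewrite !mnmDE !mnm1E mnmE enum_rankK.
  by rewrite !(inj_eq enum_rank_inj) => ->.
by apply/mnmP => k; rewrite !mnmDE !mnm1E mnmE !rank_eq; apply/eqP.
Qed.

Lemma monomial3_eq_monK (d t : nat) (k p q : 'I_d) (m j : 'I_t) (K : mult 3 d) :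
  ((U_(enum_rank (k, m)) + U_(enum_rank (p, m)) + U_(enum_rank (q, j)))%MM
     == monK K j)
  = (m == j) && (mult_of_tuple [tuple k; p; q] == K).
Proof.
rewrite monomial3_eq_mon mult_of_tuple_eqE /=.
apply/forallP/andP => [eq_mon | [/eqP-> /forallP eq_count] [u v]].
  have /eqP eq_mj : m == j.
    apply: contraTT (eq_mon (k, m)) => /negbTE neq_mj.
    by rewrite /= eqxx neq_mj !addn_eq0.
  split; first by rewrite eq_mj.
  apply/forallP => u; move: (eq_mon (u, j)).
  by rewrite /= eq_mj !xpair_eqE !eqxx !andbT addn0 addnA.
rewrite /= !xpair_eqE (eq_sym v).
case: (eqVneq j v) => _; last by rewrite !andbF.
by rewrite !andbT; have := eq_count u; rewrite addn0 addnA.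
Qed.

Lemma monomial3_eq_monA (d t : nat) (k p q b : 'I_d) (m n j : 'I_t)
    (A : mult 2 d) :
  n != j ->
  ((U_(enum_rank (k, m)) + U_(enum_rank (p, m)) + U_(enum_rank (q, j)))%MM
     == monA A b n j)
  = [&& m == n, q == b & mult_of_tuple [tuple k; p] == A].
Proof.
move=> /negbTE neq_nj; have neq_jn : (j == n) = false by rewrite eq_sym.
rewrite monomial3_eq_mon mult_of_tuple_eqE /=.
apply/forallP/and3P => [eq_mon | [/eqP-> /eqP-> /forallP eq_count] [u v]].
  have /eqP eq_mn : m == n.
    apply: contraTT (eq_mon (k, m)) => /negbTE neq_mn.
    rewrite /= eqxx neq_mn /=.
    case: (eqVneq m j) => [eq_mj | //] /=.
    have := eq_mon (q, j); rewrite /= eq_mj !xpair_eqE !eqxx neq_jn !andbT /=.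
    case: (eqVneq k b) => [->|//]; rewrite (eq_sym b q).
    by case: (q == b); case: (p == q).
  split; first by rewrite eq_mn.
  - have := eq_mon (q, j); rewrite /= eq_mn !xpair_eqE !eqxx neq_jn neq_nj.
    by rewrite !andbF /=; case: (q == b).
  - apply/forallP => u; have := eq_mon (u, n).
    by rewrite /= eq_mn !xpair_eqE !eqxx neq_nj neq_jn !andbF !andbT !addn0.
rewrite /= !xpair_eqE (eq_sym n v) (eq_sym j v) (eq_sym b u).
case: (eqVneq v n) => [->|_]; last by rewrite !andbF /= andbC.
rewrite neq_nj !andbT !andbF !addn0 -[X in X == _]addn0 -addnA.
exact: eq_count.
Qed.

(* The only candidate decomposition is ({k, p}, q). *)
Lemma sum_decompositions_indicator (S : nzRingType) d (k p q : 'I_d)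
    (K : mult 3 d) :
  \sum_(Ab : mult 2 d * 'I_d |
          [forall u, (mcount Ab.1 u + (u == Ab.2) == mcount K u)%N])
     ((q == Ab.2) && (mult_of_tuple [tuple k; p] == Ab.1))%:R
  = (mult_of_tuple [tuple k; p; q] == K)%:R :> S.
Proof.
set Ab0 := (mult_of_tuple [tuple k; p], q).
have is_Ab0 Ab :
    (q == Ab.2) && (mult_of_tuple [tuple k; p] == Ab.1) = (Ab == Ab0).
  by case: Ab => A b; rewrite /Ab0 xpair_eqE andbC (eq_sym q) (eq_sym A).
have decomp_Ab0 : [forall u, (mcount Ab0.1 u + (u == Ab0.2) == mcount K u)%N]
                  = (mult_of_tuple [tuple k; p; q] == K).
  rewrite mult_of_tuple_eqE; apply: eq_forallb => u.
  by rewrite mcount_mult_of_tuple /= !addn0 -addnA (eq_sym u q).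
rewrite (eq_bigr (fun Ab => (Ab == Ab0)%:R)) => [|Ab _]; last by rewrite is_Ab0.
have [decomp | not_decomp] := boolP (mult_of_tuple [tuple k; p; q] == K).
  rewrite (bigD1 Ab0) ?decomp_Ab0 //= eqxx big1 ?addr0 // => Ab.
  by case/andP=> _ /negbTE->.
apply: big1 => Ab; case: eqVneq => [->|//].
by rewrite decomp_Ab0 (negbTE not_decomp).
Qed.

Section Coefficients.

Context {R : realType} {a d d' t : nat}.
Variables (Q Kk : 'M[R]_(a, d)) (V : 'M[R]_(d', d)) (i : 'I_d').

Lemma cK_sum (j : 'I_t) (K : mult 3 d) :
  cK Q Kk V i j K = \sum_(k < d) \sum_(q < d) \sum_(p < d)
     V i k * (Kk^T *m Q) p q * (mult_of_tuple [tuple k; p; q] == K)%:R.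
Proof.
rewrite /cK mcoeff_phi (bigD1 j) //= [X in _ + X]big1 ?addr0.
  apply: eq_bigr => k _; apply: eq_bigr => q _; apply: eq_bigr => p _.
  by rewrite monomial3_eq_monK eqxx.
move=> m /negbTE neq_mj; apply: big1 => k _; apply: big1 => q _.
by apply: big1 => p _; rewrite monomial3_eq_monK neq_mj mulr0.
Qed.

Lemma cA_sum (n j : 'I_t) (A : mult 2 d) (b : 'I_d) :
  n != j ->
  cA Q Kk V i n j A b = \sum_(k < d) \sum_(q < d) \sum_(p < d)
     V i k * (Kk^T *m Q) p q *
     ((q == b) && (mult_of_tuple [tuple k; p] == A))%:R.
Proof.
move=> neq_nj; rewrite /cA mcoeff_phi (bigD1 n) //= [X in _ + X]big1 ?addr0.
  apply: eq_bigr => k _; apply: eq_bigr => q _; apply: eq_bigr => p _.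
  by rewrite monomial3_eq_monA // eqxx.
move=> m /negbTE neq_mn; apply: big1 => k _; apply: big1 => q _.
by apply: big1 => p _; rewrite monomial3_eq_monA // neq_mn mulr0.
Qed.

Lemma cK_eq_sum_cA (n j : 'I_t) (K : mult 3 d) :
  n != j ->
  cK Q Kk V i j K
  = \sum_(Ab : mult 2 d * 'I_d |
           [forall u, (mcount Ab.1 u + (u == Ab.2) == mcount K u)%N])
      cA Q Kk V i n j Ab.1 Ab.2.
Proof.
move=> neq_nj; rewrite cK_sum.
under [RHS]eq_bigr => Ab _ do rewrite cA_sum //.
rewrite [RHS]exchange_big; apply: eq_bigr => k _.
rewrite [RHS]exchange_big; apply: eq_bigr => q _.
rewrite [RHS]exchange_big; apply: eq_bigr => p _.
by rewrite -mulr_sumr sum_decompositions_indicator.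
Qed.

End Coefficients.

Lemma LK_inJ (R : realType) (a d d' t : nat) (i : 'I_d') (n j : 'I_t)
    (hnj : n != j) (K : mult 3 d) :
  inJ a (LK R i hnj K).
Proof.
move=> y; apply=> _ [Q [Kk [V ->]]].
rewrite /yeval mevalB mevalZ mevalXU enum_rankK /=.
rewrite (big_morph _ (mevalD _) (meval0 _)).
under eq_bigr => Ab _ do
  rewrite mevalZ mevalXU enum_rankK /= mulrC divfK ?natr_nperm_neq0 //.
rewrite mulrC divfK ?natr_nperm_neq0 //.
by rewrite (cK_eq_sum_cA _ _ _ _ _ _ _ hnj) subrr.
Qed.

Theorem mainTheorem5 (R : realType) (a d d' t : nat) (ht : (2 <= t)%N)
    (i : 'I_d') (j n : 'I_t) (hnj : n != j) :
  #|{: mult 3 d}| = 'C(d + 2, 3)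
  /\ (forall K : mult 3 d, inJ a (LK R i hnj K))
  /\ (forall lam : mult 3 d -> R,
        \sum_(K : mult 3 d) lam K *: LK R i hnj K = 0 ->
        forall K, lam K = 0).
Proof.
(* [ht] is implied by [hnj]. *)
split; first exact: card_mult3.
split; first exact: LK_inJ.
exact: LK_free.
Qed.
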